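(* Let $L$ be a positive integer and let $a,b,s$ be integers with $a\mid L$, $b\mid L$, $0\le s<b$, $s\in\frac{ab}{\gcd(ab,L)}\mathbb{Z}$; let $\Lambda=\begin{pmatrix} a&0\\ s&b\end{pmatrix}\mathbb{Z}_L^2$, $\lambda_2=b/\gcd(b,s)$, $\tilde a=\lambda_2a$, and let $\tilde\Lambda$ be the subgroup of $\mathbb{Z}_L^2$ generated by $(\tilde a,0)^T$ and $(0,b)^T$. Let $g\in\mathbb{C}^L$ and for $0\le m<\lambda_2$ put $g_m=\mathbf M_{ms\bmod b}\mathbf T_{ma}g$. Then for all $f\in\mathbb{C}^L$ $$\mathbf S_{g,\Lambda}f=\sum_{m=0}^{\lambda_2-1}\mathbf S_{g_m,\tilde\Lambda}f .$$ Moreover, for all $f\in\mathbb{C}^L$, $n\in\{0,\dots,L/a-1\}$ and $k\in\{0,\dots,L/b-1\}$, writing $\tilde n=\lfloor n/\lambda_2\rfloor$ and $m=n-\lambda_2\tilde n$, $$\langle f,\mathbf M_{kb+(ms\bmod b)}\mathbf T_{na}g\rangle=e^{-2\pi i\tilde n\tilde a(ms\bmod b)/L}\,\langle f,\mathbf M_{kb}\mathbf T_{\tilde n\tilde a}g_m\rangle .$$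
   Context: Signals are vectors in $\mathbb{C}^L$ indexed by $\mathbb{Z}_L$, with $\langle f,h\rangle=\sum_{l=0}^{L-1}f(l)\overline{h(l)}$. $\mathbf T_xf(l)=f(l-x)$ (indices mod $L$), $\mathbf M_\omega f(l)=e^{2\pi il\omega/L}f(l)$, and $\pi(x,\omega)=\mathbf M_\omega\mathbf T_x$. For $h\in\mathbb{C}^L$ and a subgroup $\Gamma\le\mathbb{Z}_L^2$, the frame operator is $\mathbf S_{h,\Gamma}f=\sum_{(x,\omega)^T\in\Gamma}\langle f,\pi(x,\omega)h\rangle\,\pi(x,\omega)h$. $A\mathbb{Z}_L^2=\{Az\bmod L:z\in\mathbb{Z}_L^2\}$. *)

From HB Require Import structures.
From mathcomp Require Import all_boot all_order all_algebra.
From mathcomp Require Import reals trigo.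
From mathcomp Require Import complex.
Set Implicit Arguments. Unset Strict Implicit. Unset Printing Implicit Defensive.
Import GRing.Theory Num.Theory.
Local Open Scope ring_scope.
Local Open Scope complex_scope.

(* A signal in C^L indexed by Z_L is represented by a function nat -> R[i];
   index l is read modulo L by the operators below, and the inner product
   only uses the values at 0 <= l < L. *)
Definition signal (R : realType) := nat -> R[i].

Definition cexp (R : realType) (L : nat) (k : int) : R[i] :=
  cos (2 * pi * k%:~R / L%:R) +i* sin (2 * pi * k%:~R / L%:R).

(* T_x f (l) = f(l - x mod L) *)
Definition transl (R : realType) (L x : nat) (f : signal R) : signal R :=
  fun l => f ((l + (L - x %% L)) %% L)%N.

Definition modul (R : realType) (L w : nat) (f : signal R) : signal R :=
  fun l => cexp R L (l * w)%N%:Z * f l.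

Definition tf (R : realType) (L x w : nat) (f : signal R) : signal R :=
  modul L w (transl L x f).

Definition inner (R : realType) (L : nat) (f h : signal R) : R[i] :=
  \sum_(l < L) f l * (h l)^*.

Definition frameop (R : realType) (L : nat) (h : signal R)
    (Gamma : {set 'I_L * 'I_L}) (f : signal R) : signal R :=
  fun l => \sum_(p in Gamma) inner L f (tf L p.1 p.2 h) * tf L p.1 p.2 h l.

(* [[a,0],[s,b]] Z_L^2 = { (a z1 mod L, s z1 + b z2 mod L) } *)
Definition lowtri_lattice (L a s b : nat) : {set 'I_L * 'I_L} :=
  [set p : 'I_L * 'I_L | [exists z1 : 'I_L, exists z2 : 'I_L,
     (p.1 == (a * z1) %% L :> nat)%N && (p.2 == (s * z1 + b * z2) %% L :> nat)%N]].

(* subgroup of Z_L^2 generated by (u1,u2)^T and (v1,v2)^T: all integer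
   combinations i u + j v mod L (coefficients may be taken in Z_L). *)
Definition gen2 (L u1 u2 v1 v2 : nat) : {set 'I_L * 'I_L} :=
  [set p : 'I_L * 'I_L | [exists i : 'I_L, exists j : 'I_L,
     (p.1 == (i * u1 + j * v1) %% L :> nat)%N &&
     (p.2 == (i * u2 + j * v2) %% L :> nat)%N]].

Arguments frameop [R] L%_nat_scope h Gamma%_set_scope f _.

From HB Require Import structures.
From mathcomp Require Import all_boot all_order all_algebra.
From mathcomp Require Import reals trigo.
From mathcomp Require Import complex.
From mathcomp Require Import zify ring.
Set Implicit Arguments.
Unset Strict Implicit.
Unset Printing Implicit Defensive.

Import GRing.Theory Num.Theory.
Local Open Scope complex_scope.
Local Open Scope ring_scope.

(* Every point of [Lambda] is [(n a, k b + (n s mod b))] for unique [n < L/a]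
   and [k < L/b]. As [lam2 s = lcm(b, s)] is a multiple of [b], the shear
   [n s mod b] only depends on [m = n mod lam2]; writing [n = nt lam2 + m],
   the commutation relation between translations and modulations turns
   [pi(n a, k b + (m s mod b)) g] into a unimodular multiple of
   [pi(nt atil, k b) g_m], whose points run over [tilde Lambda]. A unimodular
   factor cancels in [<f, h> h], so the frame operator splits. *)

Section TimeFrequencyShifts.
Variables (R : realType) (L : nat).
Hypothesis L_gt0 : (0 < L)%N.

Lemma cexpD (x y : int) : cexp R L (x + y) = cexp R L x * cexp R L y.
Proof.
rewrite /cexp intrD mulrDr mulrDl cosD sinD.
by apply/eqP; rewrite eq_complex /=; apply/andP; split; apply/eqP; ring.
Qed.

Lemma cexpMDl (n r : nat) : cexp R L (n * L + r)%N = cexp R L r.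
Proof.
have cexpL : cexp R L L = 1.
  rewrite /cexp mulfK ?pnatr_eq0 -?lt0n // mulr_natl.
  by rewrite cos2pi sin2pi.
by elim: n => [|n IH] //; rewrite mulSn -addnA PoszD cexpD cexpL mul1r.
Qed.

Lemma cexp_mod (x y : nat) : (x = y %[mod L])%N -> cexp R L x = cexp R L y.
Proof. by move=> exy; rewrite (divn_eq x L) (divn_eq y L) !cexpMDl exy. Qed.

Lemma conj_cexp (k : int) : (cexp R L k)^* = cexp R L (- k).
Proof. by rewrite /cexp mulrNz !mulrN !mulNr cosN sinN. Qed.

Lemma mul_cexp_conj (k : int) : cexp R L k * (cexp R L k)^* = 1.
Proof.
rewrite /cexp; apply/eqP; rewrite eq_complex /=; apply/andP; split; apply/eqP.
  by rewrite mulrN opprK -!expr2 cos2Dsin2.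
ring.
Qed.

Definition subL (x l : nat) : nat := ((l + (L - x %% L)) %% L)%N.

Lemma subL_lt (x l : nat) : (subL x l < L)%N.
Proof. exact: ltn_pmod. Qed.

Lemma subLK (x l : nat) : (subL x l + x = l %[mod L])%N.
Proof.
rewrite /subL modnDml -modnDmr -addnA subnK ?modnDr //.
by rewrite ltnW // ltn_pmod.
Qed.

Lemma subLD (x y l : nat) : subL y (subL x l) = subL (x + y) l.
Proof.
have /eqP : (subL y (subL x l) + (x + y) = subL (x + y) l + (x + y) %[mod L])%N.
  by rewrite [RHS]subLK addnCA -modnDmr subLK modnDmr addnC subLK.
by rewrite eqn_modDr !modn_small ?subL_lt // => /eqP.
Qed.

Lemma tf_mod (x w : nat) (h : signal R) : tf L (x %% L) (w %% L) h = tf L x w h.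
Proof.
apply: boolp.funext => l; rewrite /tf /modul /transl modn_mod.
by congr (_ * _); apply: cexp_mod; rewrite modnMmr.
Qed.

(* Moving [M_w2] to the left of [T_x] produces the phase [e^{2 pi i x w2 / L}]. *)
Lemma tfD (x y w1 w2 : nat) (h : signal R) :
  tf L (x + y) (w1 + w2) h =
  (fun l => tf L x w1 (tf L y w2 h) l * cexp R L (x * w2)%N).
Proof.
apply: boolp.funext => l; rewrite /tf /modul /transl.
rewrite -/(subL x l) -/(subL y (subL x l)) -/(subL (x + y) l) subLD.
have phase : (l * (w1 + w2) = l * w1 + (subL x l * w2 + x * w2) %[mod L])%N.
  rewrite mulnDr -modnDmr -[in RHS]modnDmr -mulnDl.
  by rewrite -(modnMml (subL x l + x)) subLK modnMml.
by rewrite (cexp_mod phase) !PoszD !cexpD; ring.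
Qed.

Lemma inner_scaler (f h : signal R) (c : R[i]) :
  inner L f (fun l => h l * c) = c^* * inner L f h.
Proof. by rewrite /inner mulr_sumr; apply: eq_bigr => i _; rewrite rmorphM /=; ring. Qed.

Lemma frame_term_unimodular (f h : signal R) (k : int) (l : nat) :
  inner L f (fun l => h l * cexp R L k) * (h l * cexp R L k) = inner L f h * h l.
Proof. by rewrite inner_scaler -[RHS]mulr1 -(mul_cexp_conj k); ring. Qed.
End TimeFrequencyShifts.

Lemma mul_divn_addn_lt (L d n r : nat) :
  (d %| L)%N -> (n < L %/ d)%N -> (r < d)%N -> (n * d + r < L)%N.
Proof.
move=> dL nLd rd; have d_gt0 : (0 < d)%N by case: d rd {dL nLd}.
have : (n.+1 * d <= L)%N by rewrite -leq_divRL.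
by rewrite mulSn; lia.
Qed.

Definition ord_mod (L : nat) (L_gt0 : (0 < L)%N) (x : nat) : 'I_L :=
  Ordinal (ltn_pmod x L_gt0).

Section LowerTriangularLattice.
Variables (R : realType) (L a s b : nat).
Hypotheses (L_gt0 : (0 < L)%N) (a_dvd_L : (a %| L)%N) (b_dvd_L : (b %| L)%N).
Hypothesis b_dvd_shear : (b %| s * (L %/ a))%N.

Local Notation ordL := (ord_mod L_gt0).

Let a_gt0 : (0 < a)%N. Proof. exact: dvdn_gt0 a_dvd_L. Qed.
Let b_gt0 : (0 < b)%N. Proof. exact: dvdn_gt0 b_dvd_L. Qed.

Definition lowtri_param (q : 'I_(L %/ a) * 'I_(L %/ b)) : 'I_L * 'I_L :=
  (ordL (q.1 * a), ordL (q.2 * b + q.1 * s %% b)).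

Lemma lowtri_param_inj : injective lowtri_param.
Proof.
have small_inj d n n' r : (d %| L)%N -> (n < L %/ d)%N -> (n' < L %/ d)%N ->
    (r < d)%N -> ((n * d + r) %% L = (n' * d + r) %% L)%N -> n = n'.
  move=> dL nLd n'Ld rd; rewrite !modn_small ?mul_divn_addn_lt // => /addIn /eqP.
  by rewrite eqn_pmul2r ?(leq_ltn_trans _ rd) // => /eqP.
move=> [n k] [n' k'] [/= e1 e2].
have en : n = n'.
  by apply: val_inj; apply: (small_inj a _ _ 0); rewrite ?addn0 ?ltn_ord.
rewrite -en in e2 *; congr pair; apply: val_inj.
by apply: (small_inj b _ _ _ _ _ _ _ e2); rewrite ?ltn_pmod.
Qed.

Lemma lowtri_latticeE : lowtri_lattice L a s b = lowtri_param @: setT.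
Proof.
have La_gt0 : (0 < L %/ a)%N by rewrite divn_gt0 // dvdn_leq.
have Lb_gt0 : (0 < L %/ b)%N by rewrite divn_gt0 // dvdn_leq.
have [c shearE] := dvdnP b_dvd_shear.
apply/setP => -[p1 p2]; rewrite inE; apply/existsP/imsetP => /=.
- move=> [z1 /existsP [z2 /andP [/eqP p1E /eqP p2E]]].
  set n := (z1 %% (L %/ a))%N; set q := (z1 %/ (L %/ a))%N.
  set t := (n * s %/ b)%N; set r := (n * s %% b)%N.
  exists (Ordinal (ltn_pmod z1 La_gt0),
          Ordinal (ltn_pmod (q * c + t + z2) Lb_gt0)) => //.
  have z1E : nat_of_ord z1 = (q * (L %/ a) + n)%N by rewrite /q /n -divn_eq.
  have nsE : (n * s = t * b + r)%N by rewrite /t /r -divn_eq.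
  have shearqE : (s * (L %/ a) * q = c * b * q)%N by rewrite shearE.
  congr pair; apply: val_inj => /=.
    by rewrite p1E muln_modl divnK // modn_mod mulnC.
  by rewrite p2E muln_modl divnK // modnDml -/n -/r; congr modn; lia.
- move=> [[n k] _ [-> ->]] /=.
  set t := (n * s %/ b)%N; set r := (n * s %% b)%N.
  have nsE : (n * s = t * b + r)%N by rewrite /t /r -divn_eq.
  (* [(L - 1) t] stands for [- t] modulo [L]. *)
  exists (ordL n); apply/existsP; exists (ordL (k + (L - 1) * t)).
  apply/andP; split; apply/eqP => /=; first by rewrite modnMmr mulnC.
  rewrite -[in RHS]modnDm !modnMmr modnDm.
  have -> : (s * n + b * (k + (L - 1) * t) = t * b * L + (k * b + r))%N by nia.
  by rewrite modnMDl.
Qed.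

Lemma frameop_lowtri (h f : signal R) (l : nat) :
  frameop L h (lowtri_lattice L a s b) f l =
  \sum_(n < L %/ a) \sum_(k < L %/ b)
     inner L f (tf L (n * a) (k * b + n * s %% b) h) *
     tf L (n * a) (k * b + n * s %% b) h l.
Proof.
rewrite /frameop lowtri_latticeE big_imset; last first.
  by move=> ? ? _ _ /lowtri_param_inj.
rewrite pair_big /=; apply: eq_big => [q | [n k] _]; first by rewrite in_setT.
by rewrite /= !tf_mod.
Qed.
End LowerTriangularLattice.

Lemma gen2_diagE (L u b : nat) : gen2 L u 0 0 b = lowtri_lattice L u 0 b.
Proof.
apply/setP => p; rewrite !inE.
apply: eq_existsb => i; apply: eq_existsb => j.
by rewrite !muln0 addn0 add0n mul0n add0n mulnC [(j * b)%N]mulnC.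
Qed.

Lemma frameop_gen2_diag (R : realType) (L u b : nat) (h f : signal R) (l : nat) :
  (0 < L)%N -> (u %| L)%N -> (b %| L)%N ->
  frameop L h (gen2 L u 0 0 b) f l =
  \sum_(n < L %/ u) \sum_(k < L %/ b)
     inner L f (tf L (n * u) (k * b) h) * tf L (n * u) (k * b) h l.
Proof.
move=> L_gt0 uL bL; rewrite gen2_diagE frameop_lowtri ?dvdn0 //.
by apply: eq_bigr => n _; apply: eq_bigr => k _; rewrite muln0 mod0n addn0.
Qed.

Lemma big_ord_divmod (T : Type) (idx : T) (op : Monoid.com_law idx)
    (N c : nat) (F : nat -> nat -> T) : (0 < c)%N ->
  \big[op/idx]_(n < N * c) F (n %/ c)%N (n %% c)%N =
  \big[op/idx]_(m < c) \big[op/idx]_(q < N) F q m.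
Proof.
move=> c_gt0; rewrite exchange_big.
rewrite -(big_mkord xpredT (fun n => F (n %/ c) (n %% c)))%N.
rewrite big_nat_mul big_mkord /=.
apply: eq_bigr => q _; rewrite mulSn -{1}[(q * c)%N]add0n big_addn addnK big_mkord.
apply: eq_bigr => m _; rewrite addnC divnMDl // modnMDl.
by rewrite divn_small ?modn_small ?addn0.
Qed.

Section GaborSplitting.
Variables (R : realType) (L a b s : nat) (g : signal R).
Hypotheses (L_gt0 : (0 < L)%N) (a_dvd_L : (a %| L)%N) (b_dvd_L : (b %| L)%N).
Hypothesis s_admissible : ((a * b) %/ gcdn (a * b) L %| s)%N.

Local Notation G := (gcdn (a * b) L).
Local Notation lam2 := (b %/ gcdn b s)%N.
Local Notation atil := (lam2 * a)%N.
Local Notation gm m := (tf L (m * a) (m * s %% b) g).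

Let a_gt0 : (0 < a)%N. Proof. exact: dvdn_gt0 a_dvd_L. Qed.
Let b_gt0 : (0 < b)%N. Proof. exact: dvdn_gt0 b_dvd_L. Qed.
Let G_gt0 : (0 < G)%N. Proof. by rewrite gcdn_gt0 L_gt0 orbT. Qed.
Let divG_mul : ((a * b) %/ G * G = a * b)%N. Proof. by rewrite divnK ?dvdn_gcdl. Qed.

Lemma b_dvd_shear : (b %| s * (L %/ a))%N.
Proof.
have cofactorE : ((a * b) %/ G * (L %/ a) = b * (L %/ G))%N.
  have aG_gt0 : (0 < a * G)%N by rewrite muln_gt0 a_gt0.
  apply/eqP; rewrite -(eqn_pmul2r aG_gt0); apply/eqP.
  have -> : ((a * b) %/ G * (L %/ a) * (a * G) =
             (a * b) %/ G * G * (L %/ a * a))%N by ring.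
  have -> : (b * (L %/ G) * (a * G) = a * b * (L %/ G * G))%N by ring.
  by rewrite divG_mul !divnK ?dvdn_gcdr.
by rewrite (dvdn_trans _ (dvdn_mul s_admissible (dvdnn _))) // cofactorE dvdn_mulr.
Qed.

Lemma atil_dvd_L : (atil %| L)%N.
Proof.
have gcd_gt0 : (0 < gcdn b s)%N by rewrite gcdn_gt0 b_gt0.
have divG_dvd_b : ((a * b) %/ G %| b)%N.
  rewrite dvdn_divLR ?dvdn_gcdl // [(b * _)%N]mulnC dvdn_mul //.
  by rewrite dvdn_gcd a_dvd_L dvdn_mulr.
apply: (dvdn_trans _ (dvdn_gcdr (a * b) L)); rewrite -(dvdn_pmul2r gcd_gt0).
rewrite mulnAC divnK ?dvdn_gcdl // [(b * a)%N]mulnC -{1}divG_mul.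
rewrite [X in (_ %| X)%N]mulnC dvdn_pmul2r //.
by rewrite dvdn_gcd s_admissible divG_dvd_b.
Qed.

Lemma lam2_gt0 : (0 < lam2)%N.
Proof. by rewrite divn_gt0 ?gcdn_gt0 ?b_gt0 // dvdn_leq ?dvdn_gcdl. Qed.

(* [lam2 * s] is [lcm(b, s)], so [n s mod b] only depends on [n mod lam2]. *)
Lemma shear_mod_lam2 (n : nat) : (n * s %% b = (n %% lam2) * s %% b)%N.
Proof.
have [c lcmE] : exists c, (lam2 * s = c * b)%N.
  by apply/dvdnP; rewrite divn_mulAC ?dvdn_gcdl // -/(lcmn b s) dvdn_lcml.
by rewrite {1}(divn_eq n lam2) mulnDl -mulnA lcmE mulnA modnMDl.
Qed.

Lemma tf_split (n w : nat) :
  tf L (n * a) (w + (n %% lam2) * s %% b) g =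
  (fun l => tf L (n %/ lam2 * atil) w (gm (n %% lam2)) l *
            cexp R L (n %/ lam2 * atil * ((n %% lam2) * s %% b))%N).
Proof. by rewrite -tfD // {1}(divn_eq n lam2) mulnDl mulnA. Qed.

Lemma inner_split (f : signal R) (n w : nat) :
  inner L f (tf L (n * a) (w + (n %% lam2) * s %% b) g) =
  cexp R L (- (n %/ lam2 * atil * ((n %% lam2) * s %% b))%N%:Z) *
  inner L f (tf L (n %/ lam2 * atil) w (gm (n %% lam2))).
Proof. by rewrite tf_split inner_scaler conj_cexp. Qed.

Lemma frameop_split (f : signal R) (l : nat) :
  frameop L g (lowtri_lattice L a s b) f l =
  \sum_(m < lam2) frameop L (gm m) (gen2 L atil 0 0 b) f l.
Proof.
rewrite frameop_lowtri ?b_dvd_shear //.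
under eq_bigr => n _ do under eq_bigr => k _ do
  rewrite shear_mod_lam2 tf_split frame_term_unimodular.
have -> : (L %/ a = L %/ atil * lam2)%N.
  by rewrite -[in LHS](divnK atil_dvd_L) mulnA mulnK.
rewrite (big_ord_divmod _ _ (fun q m => \sum_(k < L %/ b)
  inner L f (tf L (q * atil) (k * b) (gm m)) * tf L (q * atil) (k * b) (gm m) l))
  ?lam2_gt0 //.
by apply: eq_bigr => m _; rewrite frameop_gen2_diag ?atil_dvd_L.
Qed.
End GaborSplitting.

Theorem proposition3p2 (R : realType) (L a b s : nat) (g : signal R) :
  (0 < L)%N -> (a %| L)%N -> (b %| L)%N -> (s < b)%N ->
  ((a * b) %/ gcdn (a * b) L %| s)%N ->
  let lam2 := (b %/ gcdn b s)%N in
  let atil := (lam2 * a)%N in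
  let Lam := lowtri_lattice L a s b in
  let LamT := gen2 L atil 0 0 b in
  let gm := fun m : nat => tf L (m * a) ((m * s) %% b) g in
  (forall (f : signal R) (l : nat), (l < L)%N ->
     frameop L g Lam f l = \sum_(m < lam2) frameop L (gm m) LamT f l)
  /\
  (forall (f : signal R) (n k : nat), (n < L %/ a)%N -> (k < L %/ b)%N ->
     let nt := (n %/ lam2)%N in
     let m := (n - lam2 * nt)%N in
     inner L f (tf L (n * a) (k * b + (m * s) %% b) g)
     = cexp R L (- ((nt * atil * ((m * s) %% b))%N%:Z)) *
       inner L f (tf L (nt * atil) (k * b) (gm m))).
Proof.
move=> L_gt0 a_dvd_L b_dvd_L _ s_admissible lam2 atil Lam LamT gm; split.
  by move=> f l _; apply: frameop_split.
move=> f n k _ _ nt m.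
have -> : m = (n %% lam2)%N by rewrite /m /nt {1}(divn_eq n lam2) mulnC addKn.
exact: inner_split.
Qed.
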